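(* Let $A,B\subset\mathbb{R}^n$ be set-germs at $0$ with $0\in\overline{A}\cap\overline{B}$, and let $h:(\mathbb{R}^n,0)\to(\mathbb{R}^n,0)$ be a bi-Lipschitz homeomorphism (germ). Suppose that $B$ and $h(B)$ satisfy condition $(SSP)$. Then $D(A)\subset D(B)$ if and only if $D(h(A))\subset D(h(B))$.
   Context: A bi-Lipschitz homeomorphism germ is a homeomorphism between neighbourhoods of $0$ fixing $0$ with $K_1|x-y|\le|h(x)-h(y)|\le K_2|x-y|$ for some $0<K_1\le K_2$ near $0$. Direction set: $D(A)=\{a\in S^{n-1} : \exists\, \{x_i\}\subset A\setminus\{0\},\ x_i\to 0,\ x_i/\|x_i\|\to a\}$. A set-germ $A$ at $0$ with $0\in\overline{A}$ satisfies condition $(SSP)$ if for every sequence $\{a_m\}\subset\mathbb{R}^n$ with $a_m\to 0$ and $\lim_{m\to\infty} a_m/\|a_m\|\in D(A)$, there is a sequence $\{b_m\}\subset A$ with $\|a_m-b_m\|\ll\|a_m\|,\|b_m\|$ (i.e. $\|a_m-b_m\|/\|a_m\|\to0$ and $\|a_m-b_m\|/\|b_m\|\to0$). *)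

(* R^n is 'rV[R]_n over R : realType, with the
   product (matrix) topology; lengths use the Euclidean norm [enorm]. *)
From HB Require Import structures.
From mathcomp Require Import all_boot all_order all_algebra.
From mathcomp Require Import all_classical all_reals all_analysis.
Set Implicit Arguments. Unset Strict Implicit. Unset Printing Implicit Defensive.
Import Order.TTheory GRing.Theory Num.Theory.
Import numFieldNormedType.Exports.
Local Open Scope classical_set_scope.
Local Open Scope ring_scope.

Section Defs.
Context {R : realType} {n : nat}.
Local Notation vec := 'rV[R]_n.

Definition enorm (x : vec) : R := Num.sqrt (\sum_(i < n) x ord0 i ^+ 2).

Definition dir (x : vec) : vec := (enorm x)^-1 *: x.

Definition dirset (A : set vec) : set vec :=
  [set a | enorm a = 1 /\
     exists x : nat -> vec, (forall i, A (x i) /\ x i != 0) /\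
       x @ \oo --> (0 : vec) /\ dir \o x @ \oo --> a].

Definition SSP (A : set vec) : Prop :=
  forall a : nat -> vec,
    (forall m, a m != 0) -> a @ \oo --> (0 : vec) ->
    (exists l, dirset A l /\ dir \o a @ \oo --> l) ->
    exists b : nat -> vec, (forall m, A (b m) /\ b m != 0) /\
      (fun m => enorm (a m - b m) / enorm (a m)) @ \oo --> (0 : R) /\
      (fun m => enorm (a m - b m) / enorm (b m)) @ \oo --> (0 : R).

(* h is a bi-Lipschitz homeomorphism germ (R^n,0) -> (R^n,0), realized as a
   homeomorphism h : U -> V between open neighbourhoods U, V of 0 with
   inverse g, h 0 = 0, and bi-Lipschitz on a neighbourhood of 0. *)
Definition bilip_homeo_germ (h : vec -> vec) (U V : set vec) : Prop :=
  [/\ open U, open V, U 0, V 0 & h 0 = 0] /\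
  (exists g : vec -> vec,
     [/\ (forall x, U x -> V (h x)), (forall y, V y -> U (g y)),
         (forall x, U x -> g (h x) = x) & (forall y, V y -> h (g y) = y)] /\
     {within U, continuous h} /\ {within V, continuous g}) /\
  (exists K1 K2 r : R, [/\ 0 < K1, K1 <= K2, 0 < r &
     forall x y, U x -> U y -> enorm x < r -> enorm y < r ->
       K1 * enorm (x - y) <= enorm (h x - h y) /\
       enorm (h x - h y) <= K2 * enorm (x - y)]).

End Defs.

From HB Require Import structures.
From mathcomp Require Import all_boot all_order all_algebra.
From mathcomp Require Import all_classical all_reals all_analysis.
From mathcomp Require Import ring lra.
Import Order.TTheory GRing.Theory Num.Theory.
Import numFieldNormedType.Exports.
Local Open Scope classical_set_scope.
Local Open Scope ring_scope.

(** Let [F] be bi-Lipschitz near 0 with [F 0 = 0], and let [G] be a local inverse of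
    [F] that is continuous at 0. Suppose [F] maps [A'] into [A], [G] maps [B] into
    [B'], and [B] satisfies (SSP); then D(A) ⊆ D(B) implies D(A') ⊆ D(B').
    Indeed, realise c ∈ D(A') by x_m -> 0 in A'. The points p_m = F x_m of A tend
    to 0, and by compactness of the sphere a subsequence of their directions
    converges to some d ∈ D(A) ⊆ D(B). Condition (SSP) yields b_m ∈ B with
    |p_m - b_m| << |p_m|, and the bi-Lipschitz bounds turn this into
    |x_m - q_m| << |x_m| for q_m = G b_m ∈ B'; so the directions of q_m also tend
    to c, and c ∈ D(B'). The two implications of the theorem are the cases
    (F, G) = (h^-1, h), using (SSP) for B, and (F, G) = (h, h^-1), using (SSP)
    for h(B). *)

Section EuclideanNorm.
Context {R : realType} {n : nat}.
Local Notation vec := 'rV[R]_n.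
Implicit Types x y : vec.

Lemma enorm_ge0 x : 0 <= enorm x.
Proof. exact: sqrtr_ge0. Qed.

Lemma enorm_sqr x : enorm x ^+ 2 = \sum_(i < n) x ord0 i ^+ 2.
Proof. by rewrite sqr_sqrtr // sumr_ge0 // => i _; exact: sqr_ge0. Qed.

Lemma enorm_eq0 x : (enorm x == 0) = (x == 0).
Proof.
apply/idP/eqP => [|->]; last first.
  by rewrite /enorm big1 ?sqrtr0 // => i _; rewrite mxE expr0n.
rewrite -sqrf_eq0 enorm_sqr => /eqP /psumr_eq0P x0.
apply/rowP => i; rewrite mxE; apply/eqP; rewrite -sqrf_eq0.
by apply/eqP/x0 => // j _; exact: sqr_ge0.
Qed.

Lemma enorm_gt0 x : (0 < enorm x) = (x != 0).
Proof. by rewrite lt_def enorm_ge0 enorm_eq0 andbT. Qed.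

Lemma enormZ c x : enorm (c *: x) = `|c| * enorm x.
Proof.
rewrite /enorm (eq_bigr (fun i => c ^+ 2 * x ord0 i ^+ 2)) => [|i _]; last first.
  by rewrite mxE exprMn.
by rewrite -mulr_sumr sqrtrM ?sqr_ge0 // sqrtr_sqr.
Qed.

Lemma enormN x : enorm (- x) = enorm x.
Proof. by rewrite -scaleN1r enormZ normrN1 mul1r. Qed.

Lemma enorm_distC x y : enorm (x - y) = enorm (y - x).
Proof. by rewrite -enormN opprB. Qed.

Lemma enorm_dot_le x y : \sum_(i < n) x ord0 i * y ord0 i <= enorm x * enorm y.
Proof.
have [->|x0] := eqVneq x 0.
  by rewrite big1 ?mulr_ge0 ?enorm_ge0 // => i _; rewrite mxE mul0r.
have [->|y0] := eqVneq y 0.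
  by rewrite big1 ?mulr_ge0 ?enorm_ge0 // => i _; rewrite mxE mulr0.
set a := enorm x; set b := enorm y; set S := \sum_(i < n) _.
have a_gt0 : 0 < a by rewrite enorm_gt0.
have b_gt0 : 0 < b by rewrite enorm_gt0.
have : 0 <= \sum_(i < n) (b * x ord0 i - a * y ord0 i) ^+ 2.
  by apply: sumr_ge0 => i _; exact: sqr_ge0.
have -> : \sum_(i < n) (b * x ord0 i - a * y ord0 i) ^+ 2 =
    b ^+ 2 * \sum_(i < n) x ord0 i ^+ 2 - 2 * a * b * S + a ^+ 2 * \sum_(i < n) y ord0 i ^+ 2.
  by rewrite /S !mulr_sumr -sumrN -!big_split; apply: eq_bigr => i _ /=; ring.
rewrite -!enorm_sqr -/a -/b.
have -> : b ^+ 2 * a ^+ 2 - 2 * a * b * S + a ^+ 2 * b ^+ 2 = 2 * a * b * (a * b - S) by ring.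
by rewrite pmulr_rge0 ?subr_ge0 // !mulr_gt0.
Qed.

Lemma enormD x y : enorm (x + y) <= enorm x + enorm y.
Proof.
rewrite -(@ler_pXn2r _ 2) ?nnegrE ?addr_ge0 ?enorm_ge0 // sqrrD !enorm_sqr.
rewrite (eq_bigr (fun i => x ord0 i ^+ 2 + y ord0 i ^+ 2 + (x ord0 i * y ord0 i) *+ 2)).
  by rewrite !big_split /=; have := enorm_dot_le x y; lra.
by move=> i _; rewrite mxE sqrrD addrAC.
Qed.

Lemma ler_enorm_dist x y : `|enorm x - enorm y| <= enorm (x - y).
Proof.
rewrite ler_norml; apply/andP; split.
  by have := enormD (y - x) x; rewrite subrK enorm_distC; lra.
by have := enormD (x - y) y; rewrite subrK; lra.
Qed.

Lemma coord_le_enorm x i : `|x ord0 i| <= enorm x.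
Proof.
rewrite -sqrtr_sqr ler_sqrt ?enorm_sqr ?sumr_ge0 // => [|k _]; last exact: sqr_ge0.
by rewrite (bigD1 i) //= lerDl sumr_ge0 // => k _; exact: sqr_ge0.
Qed.

Lemma normr_le_enorm x : `|x| <= enorm x.
Proof.
change (mx_norm x <= enorm x); rewrite mx_normrE; apply/bigmax_leP; split => /=.
  exact: enorm_ge0.
by move=> [i j] _ /=; rewrite (ord1 i); exact: coord_le_enorm.
Qed.

Lemma enorm_le_normr x : enorm x <= n%:R * `|x|.
Proof.
rewrite -(@ler_pXn2r _ 2) ?nnegrE ?mulr_ge0 ?enorm_ge0 // enorm_sqr exprMn.
have coord_le i : x ord0 i ^+ 2 <= `|x| ^+ 2.
  rewrite -real_normK ?num_real // lerXn2r ?nnegrE //.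
  change (`|x ord0 i| <= mx_norm x); rewrite mx_normrE.
  exact: (le_bigmax _ (fun ij : 'I_1 * 'I_n => `|x ij.1 ij.2|) (ord0, i)).
apply: (le_trans (ler_sum _ (fun i _ => coord_le i))).
rewrite sumr_const card_ord -[_ *+ n]mulr_natl; apply: ler_wpM2r; first exact: sqr_ge0.
by rewrite -natrX ler_nat; case: n => // k; rewrite leq_pmulr.
Qed.

Lemma nbhs0_enorm_lt (r : R) : 0 < r -> \forall x \near (0 : vec), enorm x < r.
Proof.
move=> r_gt0; apply/nbhs_norm0P; exists (r / (n%:R + 1)) => [|x /= x_lt].
  by rewrite /= divr_gt0 // ltr_wpDl.
rewrite (le_lt_trans (enorm_le_normr x)) // (@le_lt_trans _ _ ((n%:R + 1) * `|x|)) //.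
  by rewrite ler_wpM2r // lerDl.
by rewrite mulrC -ltr_pdivlMr // ltr_wpDl.
Qed.

End EuclideanNorm.

Section EuclideanConvergence.
Context {R : realType} {n : nat} {T : Type} {F : set_system T} {FF : Filter F}.
Local Notation vec := 'rV[R]_n.
Implicit Types (f : T -> vec) (l : vec).

Lemma enorm_cvg0P f : enorm (f t) @[t --> F] --> 0 <-> f @ F --> (0 : vec).
Proof.
rewrite -(@norm_cvg0P R _ _ F FF f); split => f0.
  by apply: (squeeze_cvgr _ (cvg_cst 0) f0); near=> t; rewrite normr_ge0 normr_le_enorm.
have nf0 : n%:R * `|f t| @[t --> F] --> (0 : R).
  by rewrite -(mulr0 n%:R); apply: cvgM => //; exact: cvg_cst.
by apply: (squeeze_cvgr _ (cvg_cst 0) nf0); near=> t; rewrite enorm_ge0 enorm_le_normr.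
Unshelve. all: by end_near. Qed.

Lemma cvg_enormP f l : enorm (f t - l) @[t --> F] --> 0 <-> f @ F --> l.
Proof. by rewrite enorm_cvg0P subr_cvg0. Qed.

Lemma cvg_enorm {f l} : f @ F --> l -> enorm (f t) @[t --> F] --> enorm l.
Proof.
move=> /cvg_enormP fl; apply/subr_cvg0/norm_cvg0P.
by apply: (squeeze_cvgr _ (cvg_cst 0) fl); near=> t; rewrite normr_ge0 ler_enorm_dist.
Unshelve. all: by end_near. Qed.

End EuclideanConvergence.

Section Directions.
Context {R : realType} {n : nat}.
Local Notation vec := 'rV[R]_n.
Implicit Types x y : vec.

Definition rel_dist x y := enorm (x - y) / enorm x.

Lemma rel_dist_ge0 x y : 0 <= rel_dist x y.
Proof. by rewrite divr_ge0 ?enorm_ge0. Qed.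

Lemma enorm_dir {x} : x != 0 -> enorm (dir x) = 1.
Proof.
by rewrite -enorm_gt0 => x_gt0; rewrite enormZ gtr0_norm ?invr_gt0 // mulVf ?gt_eqF.
Qed.

Lemma enorm_dirB x y : x != 0 -> enorm (dir x - dir y) <= 2 * rel_dist x y.
Proof.
rewrite -enorm_gt0 /rel_dist => a_gt0; set a := enorm x in a_gt0 *; set b := enorm y.
have -> : dir x - dir y = a^-1 *: (x - y) + (a^-1 - b^-1) *: y.
  by rewrite /dir scalerBr scalerBl addrA subrK.
have scale_le : `|a^-1 - b^-1| * b <= enorm (x - y) / a.
  have [->|b_neq0] := eqVneq b 0; first by rewrite mulr0 divr_ge0 ?enorm_ge0.
  have -> : `|a^-1 - b^-1| * b = `|b - a| / a.
    have b_gt0 : 0 < b by rewrite lt_def b_neq0 enorm_ge0.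
    rewrite -[X in _ * X](gtr0_norm b_gt0) -normrM -[X in _ / X](gtr0_norm a_gt0).
    by rewrite -normfV -normrM; congr `|_|; field; rewrite !gt_eqF.
  by rewrite ler_pM2r ?invr_gt0 // enorm_distC ler_enorm_dist.
apply: le_trans (enormD _ _) _; rewrite !enormZ -/b gtr0_norm ?invr_gt0 //.
by rewrite mulrC mulr_natl mulr2n lerD.
Qed.

End Directions.

Section RelativeDistanceLimits.
Context {R : realType} {n : nat} {T : Type} {F : set_system T} {FF : Filter F}.
Local Notation vec := 'rV[R]_n.
Implicit Types u v : T -> vec.

Lemma cvg_dir_rel_dist {u v} {c : vec} : (\forall t \near F, u t != 0) ->
  dir (u t) @[t --> F] --> c -> rel_dist (u t) (v t) @[t --> F] --> 0 ->
  dir (v t) @[t --> F] --> c.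
Proof.
move=> u_neq0 /cvg_enormP uc uv0; apply/cvg_enormP.
have bound0 : 2 * rel_dist (u t) (v t) + enorm (dir (u t) - c) @[t --> F] --> (0 : R).
  have -> : (0 : R) = 2 * 0 + 0 by rewrite mulr0 addr0.
  by apply: cvgD => //; apply: cvgM => //; exact: cvg_cst.
apply: (squeeze_cvgr _ (cvg_cst 0) bound0); near=> t; rewrite enorm_ge0 /=.
rewrite -(subrK (dir (u t)) (dir (v t))) -addrA (le_trans (enormD _ _)) // lerD2r.
by rewrite enorm_distC enorm_dirB //; near: t.
Unshelve. all: by end_near. Qed.

Lemma cvg0_rel_dist {u v} : (\forall t \near F, u t != 0) ->
  u @ F --> (0 : vec) -> rel_dist (u t) (v t) @[t --> F] --> 0 -> v @ F --> (0 : vec).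
Proof.
move=> u_neq0 /enorm_cvg0P u0 uv0; apply/enorm_cvg0P.
have bound0 : enorm (u t) + rel_dist (u t) (v t) * enorm (u t) @[t --> F] --> (0 : R).
  have -> : (0 : R) = 0 + 0 * 0 by rewrite mulr0 addr0.
  by apply: cvgD => //; exact: cvgM.
apply: (squeeze_cvgr _ (cvg_cst 0) bound0); near=> t; rewrite enorm_ge0 /=.
rewrite /rel_dist divfK ?enorm_eq0; last by near: t.
have vE : u t - (u t - v t) = v t by rewrite opprB addrC subrK.
by rewrite -{1}vE (le_trans (enormD _ _)) // enormN.
Unshelve. all: by end_near. Qed.

End RelativeDistanceLimits.

Lemma cvg_enorm1 {R : realType} {n : nat} {T : Type} {F : set_system T} {FF : ProperFilter F}
    {s : T -> 'rV[R]_n} {l : 'rV[R]_n} :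
  (forall t, enorm (s t) = 1) -> s @ F --> l -> enorm l = 1.
Proof.
move=> s1 /cvg_enorm; under eq_fun do rewrite s1.
by move=> /cvg_lim <-//; rewrite lim_cst.
Qed.

Lemma cluster_subseq_cvg {R : realType} {T : pseudoMetricType R} {u : nat -> T} {a : T} :
  cluster (u @ \oo) a -> exists2 f : nat -> nat, f @ \oo --> \oo & u \o f @ \oo --> a.
Proof.
move=> ua.
have hit k N : exists i, (N <= i)%N /\ ball a k.+1%:R^-1 (u i).
  have tail : (u @ \oo) (u @` [set i | (N <= i)%N]) by exists N => // i /= Ni; exists i.
  have [_ [[i Ni <-] ai]] := ua _ _ tail (nbhsx_ballx a k.+1%:R^-1 ltac:(by [])).
  by exists i.
pose pick k N := sval (cid (hit k N)).
have pickP k N : (N <= pick k N)%N /\ ball a k.+1%:R^-1 (u (pick k N)) :=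
  svalP (cid (hit k N)).
pose f := fix f k := if k is k'.+1 then pick k (f k').+1 else pick 0 0.
have f_ball k : ball a k.+1%:R^-1 (u (f k)) by case: k => [|k]; exact: (pickP _ _).2.
have f_ge k : (k <= f k)%N.
  by elim: k => [//|k IHk] /=; case: (pickP k.+1 (f k).+1) => + _; exact: leq_trans.
exists f.
  by apply/cvgnyPge => N; near=> k; apply: leq_trans (f_ge k); near: k; exact: nbhs_infty_ge.
apply/cvg_ballP => e e_gt0; near=> k; apply: le_ball (f_ball k).
by apply: ltW; near: k; exact: near_infty_natSinv_lt (PosNum e_gt0).
Unshelve. all: by end_near. Qed.

Section DirectionSets.
Context {R : realType} {n : nat}.
Local Notation vec := 'rV[R]_n.

Lemma enorm_le1_subseq_cvg {s : nat -> vec} : (forall m, enorm (s m) <= 1) ->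
  exists2 f : nat -> nat, f @ \oo --> \oo & exists l : vec, s \o f @ \oo --> l.
Proof.
move=> s_le1; pose K := [set v : vec | forall i, `[-1, 1]%classic (v ord0 i)].
have K_compact : compact K.
  by apply: (@rV_compact _ _ (fun=> `[(-1 : R), 1]%classic)) => _; exact: segment_compact.
have [l [_ sl]] : K `&` cluster (s @ \oo) !=set0.
  apply: K_compact; exists 0%N => // m _ i /=.
  by rewrite in_itv /= -ler_norml (le_trans (coord_le_enorm _ _)).
have [f f_oo sfl] := cluster_subseq_cvg sl.
by exists f => //; exists l.
Qed.

Lemma dirset_near {A : set vec} {a : vec} {x : nat -> vec} : enorm a = 1 ->
  (\forall m \near \oo, A (x m) /\ x m != 0) -> x @ \oo --> (0 : vec) -> dir \o x @ \oo --> a ->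
  dirset A a.
Proof.
move=> a1 [N _ xA] x0 xa; split => //; exists (fun m => x (m + N)%N); split.
  by move=> m; apply: xA; rewrite /= leq_addl.
by split; [move: x0 | move: xa]; rewrite -(cvg_shiftn N).
Qed.

Lemma dirsetI_near0 {A W : set vec} : (\forall x \near (0 : vec), W x) ->
  dirset A `<=` dirset (A `&` W).
Proof.
move=> W0 a [a1 [x [xA [x0 xa]]]]; apply: (dirset_near a1 _ x0 xa).
near=> m; have [Am xm0] := xA m; do 2!split => //.
by near: m; exact: x0 _ W0.
Unshelve. all: by end_near. Qed.

Lemma dirset_subseq {A : set vec} {p : nat -> vec} :
  (forall m, A (p m) /\ p m != 0) -> p @ \oo --> (0 : vec) ->
  exists2 f : nat -> nat, f @ \oo --> \oo & exists2 d, dirset A d & dir \o p \o f @ \oo --> d.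
Proof.
move=> pA p0; have dir_p1 m : enorm ((dir \o p) m) = 1 := enorm_dir (pA m).2.
have dir_p_le1 m : enorm ((dir \o p) m) <= 1 by rewrite dir_p1.
have [f f_oo [d pd]] := enorm_le1_subseq_cvg dir_p_le1.
exists f => //; exists d => //; split; first exact: cvg_enorm1 (fun m => dir_p1 (f m)) pd.
exists (p \o f); split=> [m|]; first exact: pA.
by split => //; exact: cvg_comp _ _ f_oo p0.
Qed.

End DirectionSets.

Section Transfer.
Context {R : realType} {n : nat}.
Local Notation vec := 'rV[R]_n.

Definition bilipschitz_near0 (F : vec -> vec) (k1 k2 : R) :=
  exists2 N : set vec, nbhs (0 : vec) N & forall x y, N x -> N y ->
    k1 * enorm (x - y) <= enorm (F x - F y) <= k2 * enorm (x - y).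

Lemma bilipschitz_near0_inverse {F G : vec -> vec} {k1 k2 : R} : 0 < k1 -> 0 < k2 ->
  bilipschitz_near0 F k1 k2 -> G y @[y --> (0 : vec)] --> (0 : vec) ->
  (\forall y \near (0 : vec), F (G y) = y) -> bilipschitz_near0 G k2^-1 k1^-1.
Proof.
move=> k1_gt0 k2_gt0 [N N0 FN] G0 FG.
exists (G @^-1` N `&` [set y | F (G y) = y]); first by apply: filterI => //; exact: G0.
move=> x y [/= Nx FGx] [/= Ny FGy]; have /andP[lb ub] := FN _ _ Nx Ny.
rewrite FGx FGy in lb ub.
by rewrite ler_pdivrMl // ub ler_pdivlMl.
Qed.

Lemma rel_dist_bilip_le {x y p q : vec} {k1 k2 : R} : 0 < k1 -> x != 0 -> p != 0 ->
  k1 * enorm (x - y) <= enorm (p - q) -> enorm p <= k2 * enorm x ->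
  rel_dist x y <= k2 / k1 * rel_dist p q.
Proof.
rewrite -!enorm_gt0 /rel_dist => k1_gt0 x_gt0 p_gt0 lb ub.
have dist_le : enorm (x - y) <= enorm (p - q) / k1 by rewrite ler_pdivlMr // mulrC.
have inv_le : (enorm x)^-1 <= k2 / enorm p.
  by rewrite ler_pdivlMr // mulrC ler_pdivrMr.
apply: le_trans (ler_pM (enorm_ge0 _) _ dist_le inv_le) _; first by rewrite invr_ge0 enorm_ge0.
by rewrite le_eqVlt; apply/orP; left; apply/eqP; ring.
Qed.

Lemma dirset_subset_transfer {A' B' A B : set vec} {F G : vec -> vec} {k1 k2 : R} :
  0 < k1 -> F 0 = 0 -> bilipschitz_near0 F k1 k2 -> G y @[y --> (0 : vec)] --> (0 : vec) ->
  (\forall x \near (0 : vec), A' x -> A (F x)) ->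
  (\forall y \near (0 : vec), B y -> B' (G y) /\ F (G y) = y) ->
  SSP B -> dirset A `<=` dirset B -> dirset A' `<=` dirset B'.
Proof.
move=> k1_gt0 F0 [N N0 FN] G0 FA GB B_ssp AB c.
move=> /(dirsetI_near0 (filterI N0 FA)) [c1 [x [xA [x0 xc]]]].
have Fx_bound m : k1 * enorm (x m) <= enorm (F (x m)) <= k2 * enorm (x m).
  by have := FN _ 0 (xA m).1.2.1 (nbhs_singleton N0); rewrite F0 !subr0.
have Fx_neq0 m : F (x m) != 0.
  rewrite -enorm_gt0 (lt_le_trans _ (andP (Fx_bound m)).1) // mulr_gt0 // enorm_gt0.
  exact: (xA m).2.
have Fx_A m : A (F (x m)) := (xA m).1.2.2 (xA m).1.1.
have Fx0 : F \o x @ \oo --> (0 : vec).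
  apply/enorm_cvg0P; have : k2 * enorm (x m) @[m --> \oo] --> k2 * 0.
    by apply: cvgM; [exact: cvg_cst | exact/enorm_cvg0P].
  rewrite mulr0; apply: squeeze_cvgr (cvg_cst 0); near=> m.
  by rewrite enorm_ge0 (andP (Fx_bound m)).2.
have [f f_oo [d Ad Fxd]] := dirset_subseq (fun m => conj (Fx_A m) (Fx_neq0 m)) Fx0.
have Fxf0 : F \o x \o f @ \oo --> (0 : vec) := cvg_comp _ _ f_oo Fx0.
have [b [bB [rel_Fx_b _]]] :=
  B_ssp _ (fun m => Fx_neq0 (f m)) Fxf0 (ex_intro _ d (conj (AB d Ad) Fxd)).
have b0 : b @ \oo --> (0 : vec).
  by apply: (cvg0_rel_dist _ Fxf0 rel_Fx_b); near=> m; exact: Fx_neq0.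
pose q := G \o b.
have q0 : q @ \oo --> (0 : vec) := cvg_comp _ _ b0 G0.
have qB' : \forall m \near \oo, B' (q m) /\ F (q m) = b m.
  have GBb : \forall m \near \oo, B (b m) -> B' (q m) /\ F (q m) = b m := b0 _ GB.
  by apply: filterS GBb => m; apply; exact: (bB m).1.
have rel_x_q : rel_dist (x (f m)) (q m) @[m --> \oo] --> 0.
  have : k2 / k1 * rel_dist (F (x (f m))) (b m) @[m --> \oo] --> k2 / k1 * 0.
    by apply: cvgM => //; exact: cvg_cst.
  rewrite mulr0; apply: squeeze_cvgr (cvg_cst 0); near=> m; rewrite rel_dist_ge0 /=.
  have [_ Fqb] : B' (q m) /\ F (q m) = b m by near: m.
  have Nq : N (q m) by near: m; exact: q0 _ N0.
  apply: rel_dist_bilip_le => //; first exact: (xA _).2.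
    by rewrite -Fqb; have /andP[] := FN _ _ (xA (f m)).1.2.1 Nq.
  exact: (andP (Fx_bound (f m))).2.
apply: (dirset_near c1 _ q0 (cvg_dir_rel_dist _ (cvg_comp _ _ f_oo xc) rel_x_q)).
- near=> m; have [B'q Fqb] : B' (q m) /\ F (q m) = b m by near: m.
  by split => //; apply: contra_neq (bB m).2 => q_eq0; rewrite -Fqb q_eq0.
- by near=> m; exact: (xA _).2.
Unshelve. all: by end_near. Qed.

End Transfer.

Theorem theorem5p9 (R : realType) (n : nat) (A B U V : set 'rV[R]_n)
  (h : 'rV[R]_n -> 'rV[R]_n)
  (hA : closure A 0) (hB : closure B 0)
  (hh : bilip_homeo_germ h U V)
  (sB : SSP B) (shB : SSP (h @` (B `&` U))) :
  dirset A `<=` dirset B <->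
  dirset (h @` (A `&` U)) `<=` dirset (h @` (B `&` U)).
Proof.
move: hh => [[oU oV U0 V0 h0] [[g [[hUV _ ghU hgV] [h_cont g_cont]]]]].
move=> [K1 [K2 [r [K1_gt0 K12 r_gt0 h_lip]]]].
have K2_gt0 : 0 < K2 := lt_le_trans K1_gt0 K12.
have g0 : g 0 = 0 by rewrite -h0 ghU.
have h_cvg0 : h x @[x --> (0 : 'rV[R]_n)] --> (0 : 'rV[R]_n).
  rewrite -[X in _ --> X]h0; move: h_cont; rewrite continuous_open_subspace //.
  by apply; exact: mem_set.
have g_cvg0 : g y @[y --> (0 : 'rV[R]_n)] --> (0 : 'rV[R]_n).
  rewrite -[X in _ --> X]g0; move: g_cont; rewrite continuous_open_subspace //.
  by apply; exact: mem_set.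
have h_bilip : bilipschitz_near0 h K1 K2.
  exists (U `&` [set x | enorm x < r]).
    by apply: filterI; [exact: oU | exact: nbhs0_enorm_lt].
  by move=> x y [Ux xr] [Uy yr]; have [-> ->] := h_lip x y Ux Uy xr yr.
have g_bilip : bilipschitz_near0 g K2^-1 K1^-1.
  apply: (bilipschitz_near0_inverse K1_gt0 K2_gt0 h_bilip g_cvg0).
  by apply: filterS (oV 0 V0) => y; exact: hgV.
split => sAB.
- have K2V_gt0 : 0 < K2^-1 by rewrite invr_gt0.
  apply: (dirset_subset_transfer K2V_gt0 g0 g_bilip h_cvg0 _ _ sB sAB).
    by near=> x => -[a [Aa Ua] <-]; rewrite ghU.
  near=> y => By; have Uy : U y by near: y; exact: oU 0 U0.
  by split; [exists y | rewrite ghU].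
- apply: (dirset_subset_transfer K1_gt0 h0 h_bilip g_cvg0 _ _ shB sAB).
    by near=> x => Ax; exists x => //; split => //; near: x; exact: oU 0 U0.
  by near=> y => -[b [Bb Ub] <-]; rewrite ghU.
Unshelve. all: by end_near. Qed.
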